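(* Let $\Phi$ be a natural rational associator. Then $I_\Phi(\tilde K)\in\mathrm{Chord}_{nat}$ for every knot diagram $\tilde K$ (together with its decomposition into elementary pieces).
   Context: $b_p(n)=\big[\frac{p}{(p-1)^2}n-\frac1{p-1}\big]$ ($[\cdot]$ integer part) and $D(n)=\prod_{p\text{ prime},p\le n+1}p^{b_p(n)}$. A rational associator $\Phi\in\mathrm{Assoc}_1(\mathbb{Q})$ (group-like $\Phi\in\mathbb{Q}\langle\!\langle x,y\rangle\!\rangle$ with $\Phi(x,y)=\Phi(y,x)^{-1}$, $e^{x/2}\Phi(z,x)e^{z/2}\Phi(y,z)e^{y/2}\Phi(x,y)=1$ for $x+y+z=0$, and the pentagon $\Phi(t_{1,2},t_{2,3}+t_{2,4})\Phi(t_{1,3}+t_{2,3},t_{3,4})=\Phi(t_{2,3},t_{3,4})\Phi(t_{1,2}+t_{1,3},t_{2,4}+t_{3,4})\Phi(t_{1,2},t_{2,3})$ in the completed group of infinitesimal braids on 4 strands) is natural if $\Phi\in1+\sum_{n\ge1}p^{-b_p(n)}\mathbb{Z}_p\langle x,y\rangle^n$ for every prime $p$. Chord diagrams: oriented circle with disjoint pairs of points joined by chords, up to orientation-preserving diffeomorphism; $\mathrm{Chord}(\mathbb{Q})$ is the completed span modulo the 4T relation and the one-term relation (diagrams with an isolated chord, whose endpoints are adjacent on the circle, vanish), graded by number of chords, with connected-sum product; $\mathrm{Chord}_n(\mathbb{Z})$ the integral lattice in degree $n$; $\mathrm{Chord}_{nat}=\sum_{n\ge0}D(n)^{-1}\mathrm{Chord}_n(\mathbb{Z})$.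 $I_\Phi(\tilde K)$: for a knot diagram $\tilde K$ in general position (transversal simple crossings, height Morse, distinct critical and crossing heights) decomposed into elementary pieces — maxima, minima, positive/negative crossings, and three-strand re-bracketing pieces $c,c^{-1}$ — decorate crossings with $\exp(\pm t/2)$ ($t$ the horizontal chord between the two strands), $c$ with $\Phi(t_{1,2},t_{2,3})$ and $c^{-1}$ with $\Phi(t_{1,2},t_{2,3})^{-1}$ ($t_{i,j}$ the horizontal chord between strands $i,j$), maxima/minima with nothing, with a sign $(-1)^k$ when the orientation of a strand carrying $k$ chord endpoints is reversed; the resulting element of $\mathrm{Chord}(\mathbb{Q})$ is $I_\Phi(\tilde K)$. *)

From HB Require Import structures.
From mathcomp Require Import all_boot all_order all_algebra.
From Stdlib Require List.
Set Implicit Arguments. Unset Strict Implicit. Unset Printing Implicit Defensive.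
Import Order.TTheory GRing.Theory Num.Theory.
Local Open Scope ring_scope.

(* Formal noncommutative power series over rat in the letters A:       *)
(* a series is its coefficient function on words.                      *)
Definition ser (A : Type) := seq A -> rat.

Definition sone (A : eqType) : ser A := fun w => (w == [::])%:R.

Definition smul (A : Type) (f g : ser A) : ser A :=
  fun w => \sum_(i < (size w).+1) f (take i w) * g (drop i w).

(* multiplicative inverse of a series with invertible constant term
   (the unique g with f g = 1) *)
Fixpoint sinv_aux (A : Type) (f : ser A) (n : nat) (w : seq A) : rat :=
  match n with
  | 0 => (f [::])^-1
  | n'.+1 =>
      if w is [::] then (f [::])^-1 else
      - (f [::])^-1 * \sum_(i < size w) f (take i.+1 w) * sinv_aux f n' (drop i.+1 w)
  end.
Definition sinv (A : Type) (f : ser A) : ser A := fun w => sinv_aux f (size w) w.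

(* Phi(a,b): substitute the linear forms a (for x = false) and
   b (for y = true) into a series Phi in Q<<x,y>>; a linear form
   L : A -> rat stands for sum_l L(l) * l. *)
Definition ssubst (A : Type) (f : ser bool) (a b : A -> rat) : ser A :=
  fun w => \sum_(u : (size w).-tuple bool)
      f u * \prod_(j < size w) (if tnth u j then b else a) (tnth (in_tuple w) j).

Definition sexp (A : Type) (c : A -> rat) : ser A :=
  fun w => (\prod_(j < size w) c (tnth (in_tuple w) j)) / (size w)`!%:R.

Definition addl (A : Type) (L1 L2 : A -> rat) : A -> rat := fun g => L1 g + L2 g.
Definition halfl (A : Type) (L : A -> rat) : A -> rat := fun g => L g / 2.

(* letters of Q<<x,y>>: false = x, true = y *)
Definition xf : bool -> rat := fun l => if l then 0 else 1.
Definition yf : bool -> rat := fun l => if l then 1 else 0.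
Definition zf : bool -> rat := fun _ => -1.   (* z = -x-y *)

(* group-like: Delta Phi = Phi (x) Phi with x,y primitive, written out on
   coefficients (coefficient of u (x) v in Delta Phi), and eps(Phi) = 1 *)
Definition grouplike (f : ser bool) : Prop :=
  f [::] = 1 /\
  forall u v : seq bool,
    f u * f v =
    \sum_(w : (size u + size v).-tuple bool) \sum_(m : (size u + size v).-tuple bool)
       (if (mask m w == u) && (mask (map negb m) w == v) then f w else 0).

(* Phi(x,y) = Phi(y,x)^{-1} *)
Definition assoc_antisym (f : ser bool) : Prop :=
  forall w, f w = sinv (ssubst f yf xf) w.

(* e^{x/2} Phi(z,x) e^{z/2} Phi(y,z) e^{y/2} Phi(x,y) = 1, z = -x-y *)
Definition assoc_hexagon (f : ser bool) : Prop :=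
  forall w,
    smul (sexp (halfl xf)) (smul (ssubst f zf xf) (smul (sexp (halfl zf))
      (smul (ssubst f yf zf) (smul (sexp (halfl yf)) (ssubst f xf yf))))) w
    = sone w.

(* Infinitesimal braids on 4 strands: generators t_{ij}, i<j, strands 0..3 *)
Definition gen4 := {p : 'I_4 * 'I_4 | (p.1 < p.2)%N}.

Definition tl (i j : 'I_4) : gen4 -> rat :=
  fun g => ((((val g).1 == i) && ((val g).2 == j)) ||
            (((val g).1 == j) && ((val g).2 == i)))%:R.
Definition t4 (i j : nat) : gen4 -> rat := tl (inord i) (inord j).

(* a generator u * [L1,L2] * v of the two-sided ideal of relations of the
   infinitesimal braid algebra: kind = true : [t_ij, t_ik + t_jk], i,j,k distinct
                               kind = false: [t_ij, t_kl], i,j,k,l distinct *)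
Record igen := IGen { ig_c : rat; ig_u : seq gen4; ig_i : 'I_4; ig_j : 'I_4;
                      ig_k : 'I_4; ig_l : 'I_4; ig_kind : bool; ig_v : seq gen4 }.

Definition igen_ok (x : igen) : Prop :=
  if ig_kind x then uniq [:: ig_i x; ig_j x; ig_k x]
  else uniq [:: ig_i x; ig_j x; ig_k x; ig_l x].

Definition igen_forms (x : igen) : (gen4 -> rat) * (gen4 -> rat) :=
  if ig_kind x then (tl (ig_i x) (ig_j x), addl (tl (ig_i x) (ig_k x)) (tl (ig_j x) (ig_k x)))
  else (tl (ig_i x) (ig_j x), tl (ig_k x) (ig_l x)).

(* coefficient of the word w in u [L1,L2] v *)
Definition igen_coef (x : igen) (w : seq gen4) : rat :=
  let: (L1, L2) := igen_forms x in
  if (size w == size (ig_u x) + 2 + size (ig_v x))%N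
     && (take (size (ig_u x)) w == ig_u x)
     && (drop (size (ig_u x)).+2 w == ig_v x)
  then match drop (size (ig_u x)) w with
       | g1 :: g2 :: _ => L1 g1 * L2 g2 - L2 g1 * L1 g2
       | _ => 0
       end
  else 0.

(* e is zero in the completed algebra of infinitesimal braids on 4 strands:
   every homogeneous component lies in the (graded) ideal of relations *)
Definition zero_in_braids4 (e : ser gen4) : Prop :=
  forall n : nat, exists l : seq igen,
    List.Forall igen_ok l /\
    forall w : seq gen4, size w = n -> e w = \sum_(x <- l) ig_c x * igen_coef x w.

Definition assoc_pentagon (f : ser bool) : Prop :=
  zero_in_braids4 (fun w =>
    smul (ssubst f (t4 0 1) (addl (t4 1 2) (t4 1 3)))
         (ssubst f (addl (t4 0 2) (t4 1 2)) (t4 2 3)) w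
    - smul (ssubst f (t4 1 2) (t4 2 3))
        (smul (ssubst f (addl (t4 0 1) (t4 0 2)) (addl (t4 1 3) (t4 2 3)))
              (ssubst f (t4 0 1) (t4 1 2))) w).

Definition rational_associator (f : ser bool) : Prop :=
  [/\ grouplike f, assoc_antisym f, assoc_hexagon f & assoc_pentagon f].

Definition bp (p n : nat) : int :=
  Num.floor ((p%:R / ((p%:R - 1) ^+ 2)) * n%:R - 1 / (p%:R - 1) : rat).

Definition Dn (n : nat) : rat := \prod_(p < n.+2 | prime p) (p%:R : rat) ^ (bp p n).

Definition padic_int (p : nat) (q : rat) : bool := ~~ (p %| absz (denq q))%N.

(* Phi in 1 + sum_{n>=1} p^{-b_p(n)} Z_p<x,y>^n for every prime p *)
Definition natural_coeffs (f : ser bool) : Prop :=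
  f [::] = 1 /\
  forall (p : nat) (w : seq bool), prime p -> (1 <= size w)%N ->
    padic_int p (f w * (p%:R : rat) ^ (bp p (size w))).

Definition natural_associator (f : ser bool) : Prop :=
  rational_associator f /\ natural_coeffs f.

(* Chord diagrams.  A chord diagram with n chords is presented by a word *)
(* of length 2n (endpoint labels read along the oriented circle from a  *)
(* base point); each label occurs exactly twice.                        *)
Definition valid_cd (s : seq nat) : bool := all (fun x => count_mem x s == 2%N) s.

(* formal Q-linear combinations of presented diagrams *)
Definition fsum := seq (rat * seq nat).
Definition fcoef (X : fsum) (w : seq nat) : rat := \sum_(x <- X | x.2 == w) x.1.
Definition fscale (c : rat) (X : fsum) : fsum := [seq (c * x.1, x.2) | x <- X].

(* generators of the relations defining Chord(Q) on presented diagrams: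
   change of base point, change of labels, one-term relation, 4T relation *)
Inductive cdrel :=
| CRot of nat & seq nat
| CRelab of (nat -> nat) & seq nat
| C1T of seq nat & seq nat & nat
| C4T of nat & nat & seq nat & seq nat & seq nat & 'I_3 & 'I_3 & 'I_3.

Definition pick3 (S : seq nat * seq nat * seq nat) (j : 'I_3) : seq nat :=
  if val j == 0%N then S.1.1 else if val j == 1%N then S.1.2 else S.2.

(* the four terms of [t12, t13 + t23] = t12 t13 + t12 t23 - t13 t12 - t23 t12
   on three arcs S1,S2,S3 of the circle (u : chord S1-S2, v : the other one) *)
Definition fourT_word (u v : nat) (P0 P1 P2 : seq nat) (a b c : 'I_3) (q : nat) :=
  let S := match q with
           | 0 => ([:: u; v], [:: u], [:: v])
           | 1 => ([:: u], [:: u; v], [:: v])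
           | 2 => ([:: v; u], [:: u], [:: v])
           | _ => ([:: u], [:: v; u], [:: v])
           end in
  pick3 S a ++ P0 ++ pick3 S b ++ P1 ++ pick3 S c ++ P2.

Definition cdrel_ok (r : cdrel) : Prop :=
  match r with
  | CRot x s => valid_cd (x :: s)
  | CRelab f s => valid_cd s /\ {in s &, injective f}
  | C1T a b x => valid_cd (a ++ x :: x :: b)
  | C4T u v P0 P1 P2 a b c => valid_cd (fourT_word u v P0 P1 P2 a b c 0) /\ uniq [:: a; b; c]
  end.

Definition cdrel_sum (r : cdrel) : fsum :=
  match r with
  | CRot x s => [:: (1, x :: s); (-1, rcons s x)]
  | CRelab f s => [:: (1, s); (-1, map f s)]
  | C1T a b x => [:: (1, a ++ x :: x :: b)]
  | C4T u v P0 P1 P2 a b c =>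
      [:: (1, fourT_word u v P0 P1 P2 a b c 0); (1, fourT_word u v P0 P1 P2 a b c 1);
          (-1, fourT_word u v P0 P1 P2 a b c 2); (-1, fourT_word u v P0 P1 P2 a b c 3)]
  end.

Definition rel_comb (l : seq (rat * cdrel)) : fsum :=
  flatten [seq fscale x.1 (cdrel_sum x.2) | x <- l].

(* X (a combination of degree-n diagrams) lies in Chord_n(Z), the image of
   the integral span of degree-n chord diagrams in Chord(Q) *)
Definition in_chord_Z (n : nat) (X : fsum) : Prop :=
  exists z : seq (int * seq nat),
    all (fun y => valid_cd y.2 && (size y.2 == 2 * n)%N) z /\
    exists r : seq (rat * cdrel),
      List.Forall (fun y => cdrel_ok y.2) r /\
      forall w, fcoef X w = \sum_(y <- z | y.2 == w) (y.1)%:~R + fcoef (rel_comb r) w.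

(* an element of Chord(Q), given by its homogeneous components, lies in
   Chord_nat = sum_n D(n)^{-1} Chord_n(Z) *)
Definition in_chord_nat (I : nat -> fsum) : Prop :=
  forall n, in_chord_Z n (fscale (Dn n) (I n)).

(* Knot diagrams in general position, sliced (bottom to top) into       *)
(* elementary pieces; strands at a level are numbered 0,1,... from left.*)
Inductive piece :=
| PMax of nat            (* maximum joining strands i, i+1 *)
| PMin of nat            (* minimum creating new strands i, i+1 *)
| PCross of bool & nat   (* positive (true) / negative crossing of strands i, i+1 *)
| PAssoc of bool & nat.  (* c (true) / c^{-1} (false) on strands i, i+1, i+2 *)

Definition next_count (m : nat) (p : piece) : nat :=
  match p with
  | PMax _ => (m - 2)%N
  | PMin _ => m.+2
  | _ => m
  end.

Definition piece_ok (m : nat) (p : piece) : bool :=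
  match p with
  | PMax i => (i.+2 <= m)%N
  | PMin i => (i <= m)%N
  | PCross _ i => (i.+2 <= m)%N
  | PAssoc _ i => (i.+3 <= m)%N
  end.

Fixpoint wf_from (m : nat) (ps : seq piece) : bool :=
  match ps with
  | [::] => m == 0%N
  | p :: ps' => piece_ok m p && wf_from (next_count m p) ps'
  end.

Fixpoint counts (m : nat) (ps : seq piece) : seq nat :=
  match ps with
  | [::] => [:: m]
  | p :: ps' => m :: counts (next_count m p) ps'
  end.

(* number of strands entering piece k from below *)
Definition lev (ps : seq piece) (k : nat) : nat := nth 0%N (counts 0 ps) k.

(* segment (k,s) = strand s inside piece k (below its event).  A state
   (k,s,up) = segment (k,s) to be traversed next, upwards iff up. *)
Definition step (ps : seq piece) (st : nat * nat * bool) : nat * nat * bool :=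
  let: (k, s, up) := st in
  if up then
    match nth (PMin 0) ps k with
    | PMax i => if s == i then (k, i.+1, false) else if s == i.+1 then (k, i, false)
                else (k.+1, if (s < i)%N then s else (s - 2)%N, true)
    | PMin i => (k.+1, if (s < i)%N then s else s.+2, true)
    | PCross _ i => (k.+1, if s == i then i.+1 else if s == i.+1 then i else s, true)
    | PAssoc _ _ => (k.+1, s, true)
    end
  else
    match k with
    | 0 => st
    | k'.+1 =>
      match nth (PMin 0) ps k' with
      | PMin i => if s == i then (k, i.+1, true) else if s == i.+1 then (k, i, true)
                  else (k', if (s < i)%N then s else (s - 2)%N, false)
      | PMax i => (k', if (s < i)%N then s else s.+2, false)
      | PCross _ i => (k', if s == i then i.+1 else if s == i.+1 then i else s, false)
      | PAssoc _ _ => (k', s, false)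
      end
    end.

Definition nsegs (ps : seq piece) : nat := sumn (take (size ps) (counts 0 ps)).

(* start of the traversal; o chooses the orientation of the knot *)
Definition start (o : bool) : nat * nat * bool := (1%N, if o then 0%N else 1%N, true).

Definition tour (ps : seq piece) (o : bool) := traject (step ps) (start o) (nsegs ps).

(* (ps, o) is an oriented knot diagram: well-formed slicing starting and
   ending with no strands, whose closure is connected (one component):
   the traversal along the orientation visits every segment once. *)
Definition is_knot_diagram (ps : seq piece) (o : bool) : bool :=
  [&& wf_from 0 ps, (0 < size ps)%N,
      uniq [seq (x.1.1, x.1.2) | x <- tour ps o],
      all (fun x => (x.1.1 < size ps)%N && (x.1.2 < lev ps x.1.1)%N) (tour ps o)
    & iter (nsegs ps) (step ps) (start o) == start o].

(* The invariant.  A horizontal chord at a level is a pair of strand     *)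
(* positions; the decoration of piece k is a series in such chords,     *)
(* the first letter of a word being the lowest chord.                   *)
Fixpoint bseqs (j : nat) : seq (seq bool) :=
  if j is j'.+1 then [seq b :: s | b <- [:: false; true], s <- bseqs j'] else [:: [::]].

(* degree-j part of the decoration of a piece *)
Definition piece_terms (f : ser bool) (p : piece) (j : nat) : seq (rat * seq (nat * nat)) :=
  match p with
  | PMax _ | PMin _ => if j == 0%N then [:: (1, [::])] else [::]
  | PCross pos i =>
      [:: ((if pos then 1 else -1) ^+ j / (2 ^+ j * j`!%:R), nseq j (i, i.+1))]
  | PAssoc c i =>
      [seq ((if c then f else sinv f) u,
            [seq (if b then (i.+1, i.+2) else (i, i.+1)) | b <- u]) | u <- bseqs j]
  end.

Fixpoint terms (f : ser bool) (ps : seq piece) (n : nat)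
  : seq (rat * seq (seq (nat * nat))) :=
  match ps with
  | [::] => if n == 0%N then [:: (1, [::])] else [::]
  | p :: ps' =>
      flatten [seq [seq (a.1 * b.1, a.2 :: b.2) | a <- piece_terms f p j,
                                                  b <- terms f ps' (n - j)]
              | j <- iota 0 n.+1]
  end.

Definition touches (c : nat * nat) (s : nat) : bool := (c.1 == s) || (c.2 == s).

(* labels of chord endpoints met when traversing the state st *)
Definition emit (chs : seq (seq (nat * nat))) (st : nat * nat * bool) : seq nat :=
  let: (k, s, up) := st in
  let wk := nth [::] chs k in
  let off := sumn (map size (take k chs)) in
  let ls := [seq (off + l)%N | l <- iota 0 (size wk) & touches (nth (0%N, 0%N) wk l) s] in
  if up then ls else rev ls.

Definition downs (chs : seq (seq (nat * nat))) (st : nat * nat * bool) : nat :=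
  if st.2 then 0%N else size (emit chs st).

(* degree-n part of I_Phi(K): each choice of chords gives the chord
   diagram read along the oriented knot, with sign (-1)^(number of
   endpoints on downward (reversed) strands) *)
Definition I_Phi (f : ser bool) (ps : seq piece) (o : bool) (n : nat) : fsum :=
  [seq (x.1 * (-1) ^+ sumn (map (downs x.2) (tour ps o)),
        flatten (map (emit x.2) (tour ps o))) | x <- terms f ps n].

From HB Require Import structures.
From mathcomp Require Import all_boot all_order all_algebra.
From mathcomp Require Import ring lra zify.
Set Implicit Arguments. Unset Strict Implicit. Unset Printing Implicit Defensive.
Import Order.TTheory GRing.Theory Num.Theory.

(* Fix a prime p.  Every coefficient of the degree-n part of I_Phi(K) lies in
   p^-b_p(n) Z_(p): this holds for the coefficients of Phi by naturality, for
   those of Phi^-1 through the recursion computing the inverse series, and for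
   the crossing coefficients 1/(2^j j!) by Legendre's formula; the bound
   survives products because b_p is superadditive (a floor of a linear function
   with nonpositive intercept).  Since b_p(n) = 0 for p > n + 1, D(n) times a
   coefficient is p-integral for every p, hence an integer.  Finally every
   choice of chords, read along the knot, is a presented chord diagram with n
   chords, because each chord endpoint lies on a segment that the traversal
   visits exactly once; so D(n) I_Phi(K)_n is an integral combination of chord
   diagrams. *)

Local Open Scope ring_scope.

(* [pint p q] : [q] lies in Z_(p);  [pint_by p k q] : [q] lies in p^-k Z_(p). *)
Definition pint (p : nat) (q : rat) : Prop :=
  exists (a : int) (d : nat), ~~ (p %| d)%N /\ q * d%:R = a%:~R.

Definition pint_by (p k : nat) (q : rat) : Prop := pint p (q * p%:R ^+ k).

Section PLocalIntegers.
Variable p : nat.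
Hypothesis p_prime : prime p.

Lemma pint_int (z : int) : pint p z%:~R.
Proof.
exists z, 1%N; rewrite mulr1; split=> //.
by rewrite dvdn1; apply: contraTneq p_prime => ->.
Qed.

Lemma pint_nat (k : nat) : pint p k%:R.
Proof. exact: (pint_int k). Qed.

Lemma pintM a b : pint p a -> pint p b -> pint p (a * b).
Proof.
move=> [x [d [pNd Ea]]] [y [e [pNe Eb]]]; exists (x * y), (d * e)%N.
by rewrite Euclid_dvdM // negb_or pNd pNe natrM intrM -Ea -Eb; split=> //; ring.
Qed.

Lemma pintD a b : pint p a -> pint p b -> pint p (a + b).
Proof.
move=> [x [d [pNd Ea]]] [y [e [pNe Eb]]]; exists (x * e%:Z + y * d%:Z), (d * e)%N.
rewrite Euclid_dvdM // negb_or pNd pNe natrM intrD !intrM -Ea -Eb !pmulrn.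
by split=> //; ring.
Qed.

Lemma pintN a : pint p a -> pint p (- a).
Proof. by move=> [x [d [pNd Ea]]]; exists (- x), d; rewrite mulNr Ea intrN. Qed.

Lemma pint_prod (I : Type) (r : seq I) (P : pred I) (F : I -> rat) :
  (forall i, P i -> pint p (F i)) -> pint p (\prod_(i <- r | P i) F i).
Proof. by move=> FP; apply: big_ind => //; [exact: pint_nat 1 | exact: pintM]. Qed.

Lemma pintX a j : pint p a -> pint p (a ^+ j).
Proof. by move=> aP; elim: j => [|j IHj]; [exact: pint_nat 1 | rewrite exprS; exact: pintM]. Qed.

Lemma padic_intP q : padic_int p q <-> pint p q.
Proof.
split=> [pNden | [a [d [pNd Eq]]]].
  exists (numq q), `|denq q|%N; split=> //.
  by rewrite numqE -[`|denq q|%:R]/((`|denq q|%N%:Z)%:~R) absz_denq.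
apply/negP => /dvdn_trans p_dvd; move/negP: pNd; apply; apply: p_dvd.
have Enum : numq q * d%:Z = a * denq q.
  apply/eqP; rewrite -(eqr_int rat) !intrM numqE -Eq pmulrn; apply/eqP; ring.
rewrite -(@Gauss_dvdr _ `|numq q|); last by rewrite coprime_sym coprime_num_den.
by apply/dvdnP; exists `|a|%N; rewrite -[d]/(`|d%:Z|%N) -abszM Enum abszM.
Qed.

Lemma pint_byM a b k1 k2 : pint_by p k1 a -> pint_by p k2 b -> pint_by p (k1 + k2) (a * b).
Proof. by rewrite /pint_by exprD mulrACA; exact: pintM. Qed.

Lemma pint_by_le a k k' : (k <= k')%N -> pint_by p k a -> pint_by p k' a.
Proof.
move=> /subnKC <- Ha; rewrite /pint_by exprD mulrA -[_ ^+ (k' - k)]natrX.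
exact: pintM Ha (pint_nat _).
Qed.

Lemma pint_byD a b k : pint_by p k a -> pint_by p k b -> pint_by p k (a + b).
Proof. by rewrite /pint_by mulrDl; exact: pintD. Qed.

Lemma pint_byN a k : pint_by p k a -> pint_by p k (- a).
Proof. by rewrite /pint_by mulNr; exact: pintN. Qed.

Lemma pint_by_sum k (I : Type) (r : seq I) (P : pred I) (F : I -> rat) :
  (forall i, P i -> pint_by p k (F i)) -> pint_by p k (\sum_(i <- r | P i) F i).
Proof.
move=> FP; apply: (big_ind (pint_by p k)) => //; last by move=> x y; apply: pint_byD.
by rewrite /pint_by mul0r; exact: pint_nat 0.
Qed.

Lemma pint_by0 q : pint_by p 0 q <-> pint p q.
Proof. by rewrite /pint_by mulr1. Qed.

Lemma pint_by_inv a m k : ~~ (p %| m)%N -> (a <= k)%N -> pint_by p k ((p ^ a * m)%N%:R)^-1.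
Proof.
move=> pNm le_ak; exists (p ^ (k - a))%N%:Z, m; split=> //.
have m_neq0 : (m%:R : rat) != 0 by rewrite pnatr_eq0; apply: contraNneq pNm => ->.
have p_neq0 : (p%:R : rat) != 0 by rewrite pnatr_eq0 -lt0n prime_gt0.
rewrite -[RHS]/((p ^ (k - a))%:R) -(subnKC le_ak) exprD natrM !natrX addKn.
by field; rewrite m_neq0 expf_neq0.
Qed.

End PLocalIntegers.

Lemma int_of_pint_all q : (forall p, prime p -> pint p q) -> q = (numq q)%:~R.
Proof.
move=> Hq; suff den1 : denq q = 1 by rewrite numqE den1 mulr1.
apply/eqP; rewrite -absz_denq -[1]/(1%N%:Z) eqz_nat; apply/negPn/negP => den_neq1.
have den_gt1 : (1 < `|denq q|)%N by rewrite ltn_neqAle eq_sym den_neq1 absz_gt0 denq_neq0.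
have [p p_prime p_dvd] := pdivP den_gt1.
by have := (padic_intP p q).2 (Hq p p_prime); rewrite /padic_int p_dvd.
Qed.

(* [b_p(n)] as a natural number; the value [bnat p 0 = 0] replaces [b_p(0) = -1]
   and keeps [bnat p] superadditive. *)
Definition bnat (p n : nat) : nat := if n is 0 then 0 else `|bp p n|%N.

Section Bp.
Variable p : nat.
Hypothesis p_gt1 : (1 < p)%N.

Let P_gt1 : 1 < (p%:R : rat). Proof. by rewrite ltr1n. Qed.

Lemma bp_ge (k : int) n :
  (k <= bp p n) = (k%:~R * (p%:R - 1) ^+ 2 <= p%:R * n%:R - p%:R + 1 :> rat).
Proof.
have P1_neq0 : (p%:R - 1 : rat) != 0 by rewrite subr_eq0 gt_eqF.
rewrite /bp; have -> : p%:R / ((p%:R - 1) ^+ 2) * n%:R - 1 / (p%:R - 1) =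
          (p%:R * n%:R - p%:R + 1) / ((p%:R - 1) ^+ 2) :> rat by field.
by rewrite floor_ge_int ler_pdivlMr // exprn_gt0 // subr_gt0.
Qed.

Lemma bnatE n : (0 < n)%N -> bp p n = (bnat p n)%:Z.
Proof.
case: n => // n _; rewrite /bnat gez0_abs // bp_ge mul0r.
have : (1 : rat) <= n.+1%:R by rewrite ler1n.
have := P_gt1; nra.
Qed.

Lemma bnat_ge k n : (0 < n)%N ->
  (k <= bnat p n)%N = (k%:R * (p%:R - 1) ^+ 2 <= p%:R * n%:R - p%:R + 1 :> rat).
Proof. by move=> n_gt0; rewrite -lez_nat -bnatE // bp_ge. Qed.

Lemma bnat_superadditive a b : (bnat p a + bnat p b <= bnat p (a + b))%N.
Proof.
case: a => [|a]; first by rewrite add0n.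
case: b => [|b]; first by rewrite !addn0.
have := leqnn (bnat p a.+1); have := leqnn (bnat p b.+1).
rewrite bnat_ge // bnat_ge // => hb ha; rewrite bnat_ge // !natrD.
have := P_gt1; nra.
Qed.

Lemma bnat_eq0 n : (n.+2 <= p)%N -> bnat p n = 0%N.
Proof.
case: n => // n le_np; apply/eqP; rewrite -leqn0 leqNgt bnat_ge // mul1r -ltNge.
have : (n.+3%:R : rat) <= p%:R by rewrite ler_nat.
rewrite -!natr1 => h.
have : 0 <= (n%:R : rat) by rewrite ler0n.
have := P_gt1; nra.
Qed.

End Bp.

Lemma logn_fact_lt p j : prime p -> (0 < j)%N -> ((p - 1) * logn p j`! < j)%N.
Proof.
move=> p_prime j_gt0; have P_gt1 : (1 : rat) < p%:R by rewrite ltr1n prime_gt1.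
rewrite -(ltr_nat rat) logn_fact // natrM natrB ?prime_gt0 // natr_sum.
apply: (@le_lt_trans _ _ ((p%:R - 1) * \sum_(1 <= k < j.+1) (j%:R / p%:R ^+ k))).
  apply: ler_wpM2l; first lra.
  apply: ler_sum => k _; rewrite ler_pdivlMr ?exprn_gt0 ?(lt_trans ltr01) //.
  by rewrite -natrX -natrM ler_nat leq_divM.
have geom K : (p%:R - 1) * \sum_(1 <= k < K.+1) (j%:R / p%:R ^+ k) =
              j%:R - j%:R / p%:R ^+ K :> rat.
  elim: K => [|K IH]; first by rewrite big_geq // expr0 divr1 subrr mulr0.
  have P_neq0 : (p%:R : rat) != 0 by rewrite gt_eqF // (lt_trans ltr01).
  rewrite big_nat_recr //= mulrDr IH exprS; field.
  by rewrite P_neq0 expf_neq0.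
rewrite geom gtrBl divr_gt0 ?ltr0n // exprn_gt0 //; lra.
Qed.

Lemma crossing_coef_pint_by p (pos : bool) j : prime p ->
  pint_by p (bnat p j) ((if pos then 1 else -1) ^+ j / (2 ^+ j * j`!%:R)).
Proof.
move=> p_prime; have p_gt1 := prime_gt1 p_prime.
rewrite -[bnat p j]add0n; apply: pint_byM => //.
  apply/pint_by0; apply: pintX => //.
  by case: pos; [exact: pint_nat _ 1 | exact/pintN/(pint_nat _ 1)].
case: j => [|j]; first by rewrite mul1r invr1; exact/pint_by0/(pint_nat _ 1).
have [m m_coprime fact_eq] := pfactor_coprime p_prime (fact_gt0 j.+1).
have pNm : ~~ (p %| m)%N by rewrite -prime_coprime.
have := logn_fact_lt p_prime (ltn0Sn j).
set v := logn p j.+1`! in fact_eq * => lt_v.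
have P_gt1 : (1 : rat) < p%:R by rewrite ltr1n.
have [p_eq2 | p_neq2] := eqVneq p 2.
- subst p; have -> : (2 ^+ j.+1 * (j.+1)`!%:R : rat) = (2 ^ (j.+1 + v) * m)%N%:R.
    by rewrite fact_eq !natrM !natrX exprD; ring.
  apply: pint_by_inv => //; rewrite bnat_ge //.
  have : (v%:R : rat) <= j%:R by rewrite ler_nat; lia.
  rewrite natrD -!natr1 => h; lra.
- have -> : (2 ^+ j.+1 * (j.+1)`!%:R : rat) = (p ^ v * (2 ^ j.+1 * m))%N%:R.
    by rewrite fact_eq !natrM !natrX; ring.
  apply: pint_by_inv; rewrite ?bnat_ge //.
    rewrite Euclid_dvdM // negb_or pNm andbT Euclid_dvdX // andbT.
    by rewrite dvdn_prime2.
  have : ((p - 1) * v)%N%:R <= j%:R :> rat by rewrite ler_nat -ltnS.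
  rewrite natrM natrB ?prime_gt0 // => h.
  have P1_ge0 : (0 : rat) <= p%:R - 1 by lra.
  have := ler_wpM2l P1_ge0 h; rewrite -[j.+1%:R]natr1 => h'.
  have : (0 : rat) <= j%:R by rewrite ler0n.
  nra.
Qed.

Section NaturalSeries.
Variables (f : ser bool) (p : nat).
Hypotheses (f_natural : natural_coeffs f) (p_prime : prime p).

Lemma natural_coeff_pint_by w : pint_by p (bnat p (size w)) (f w).
Proof.
have [f0 fP] := f_natural; case: w => [|b w].
  by rewrite f0; exact/pint_by0/(pint_nat _ 1).
have := fP p (b :: w) p_prime isT; rewrite bnatE ?prime_gt1 //; exact: (padic_intP _ _).1.
Qed.

(* The recursion of [sinv_aux] expresses a coefficient of [f^-1] through
   products of coefficients of [f] and of [f^-1] of complementary degrees,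
   so superadditivity of [bnat p] propagates the bound. *)
Lemma sinv_aux_pint_by n w : (size w <= n)%N -> pint_by p (bnat p (size w)) (sinv_aux f n w).
Proof.
have f0 := f_natural.1; elim: n w => [|n IHn] [|b w] //= le_wn;
  rewrite ?f0 ?invr1; try exact/pint_by0/(pint_nat _ 1).
rewrite mulN1r; apply: pint_byN; apply: pint_by_sum => // i _.
have le_iw : (i <= size w)%N by rewrite -ltnS.
apply: (@pint_by_le _ _ _ (bnat p i.+1 + bnat p (size w - i))) => //.
  by have := bnat_superadditive (prime_gt1 p_prime) i.+1 (size w - i); rewrite addSn subnKC.
apply: pint_byM => //; last by have := IHn (drop i w); rewrite size_drop; apply; lia.
by have := natural_coeff_pint_by (b :: take i w); rewrite /= size_takel.
Qed.

Lemma sinv_pint_by w : pint_by p (bnat p (size w)) (sinv f w).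
Proof. exact: sinv_aux_pint_by. Qed.

End NaturalSeries.

Lemma Dn_pint p n x : prime p -> pint_by p (bnat p n) x -> pint p (Dn n * x).
Proof.
move=> p_prime xP; have p_gt1 := prime_gt1 p_prime.
have factorP (q : 'I_n.+2) : prime q -> pint p ((q : nat)%:R ^ bp q n).
  move=> q_prime; have n_gt0 : (0 < n)%N.
    by have := ltn_ord q; have := prime_gt1 q_prime; lia.
  by rewrite bnatE ?prime_gt1 // -exprnP -natrX; exact: pint_nat.
have [lt_pn | le_np] := ltnP p n.+2; last first.
  move: xP; rewrite /pint_by bnat_eq0 // expr0 mulr1 => xP.
  by apply: pintM => //; apply: pint_prod => // q; exact: factorP.
rewrite /Dn (bigD1 (Ordinal lt_pn)) //= mulrC mulrA.
apply: pintM => //; last by apply: pint_prod => // q /andP[q_prime _]; exact: factorP.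
by rewrite bnatE -?exprnP //; move: lt_pn p_gt1; lia.
Qed.

Definition chord_within (m : nat) (c : nat * nat) : bool :=
  [&& c.1 != c.2, (c.1 < m)%N & (c.2 < m)%N].

Lemma size_bseqs j u : u \in bseqs j -> size u = j.
Proof.
elim: j u => [|j IHj] u /=; first by rewrite inE => /eqP ->.
by rewrite !mem_cat orbF => /orP[] /mapP[s /IHj s_j ->]; rewrite /= s_j.
Qed.

Section Terms.
Variable f : ser bool.
Hypothesis f_natural : natural_coeffs f.

Lemma mem_piece_terms m pc j a : piece_ok m pc -> a \in piece_terms f pc j ->
  [/\ size a.2 = j, all (chord_within m) a.2 &
      forall p, prime p -> pint_by p (bnat p j) a.1].
Proof.
case: pc => [i|i|pos i|c i] /= pc_ok.
1,2: case: eqP => // ->; rewrite inE => /eqP -> /=.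
1,2: by split=> // p p_prime; exact/pint_by0/(pint_nat _ 1).
- rewrite inE => /eqP -> /=; split; first by rewrite size_nseq.
    by apply/allP => x /nseqP[-> _]; rewrite /chord_within /= neq_ltn ltnSn /=; lia.
  by move=> p p_prime; exact: crossing_coef_pint_by.
- case/mapP => u u_in -> /=; have size_u := size_bseqs u_in; split.
  + by rewrite size_map.
  + by apply/allP => x /mapP[[] _ ->]; rewrite /chord_within /=; lia.
  + move=> p p_prime; rewrite -size_u.
    by case: c; [exact: natural_coeff_pint_by | exact: sinv_pint_by].
Qed.

Lemma mem_terms ps m n x : wf_from m ps -> x \in terms f ps n ->
  [/\ size x.2 = size ps, sumn (map size x.2) = n,
      forall k, all (chord_within (nth 0%N (counts m ps) k)) (nth [::] x.2 k)
    & forall p, prime p -> pint_by p (bnat p n) x.1].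
Proof.
elim: ps m n x => [|pc ps IHps] m n x.
  move=> _ /=; case: eqP => // ->; rewrite inE => /eqP -> /=.
  by split=> // [k | p p_prime]; [rewrite nth_nil | exact/pint_by0/(pint_nat _ 1)].
move=> /andP[pc_ok ps_wf] /flattenP[_ /mapP[j j_in ->]] /allpairsP[[a b] /= [a_in b_in ->]].
move: j_in; rewrite mem_iota ltnS => le_jn.
have [size_a a_ok aP] := mem_piece_terms pc_ok a_in.
have [size_b sum_b b_ok bP] := IHps _ _ _ ps_wf b_in.
split=> [||[|k] //| p p_prime] /=.
- by rewrite size_b.
- by rewrite size_a sum_b subnKC.
- exact: b_ok.
- have le_bnat : (bnat p j + bnat p (n - j) <= bnat p n)%N.
    by have := bnat_superadditive (prime_gt1 p_prime) j (n - j); rewrite subnKC.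
  have := pint_byM p_prime (aP p p_prime) (bP p p_prime).
  exact: (pint_by_le p_prime le_bnat).
Qed.

End Terms.

Local Close Scope ring_scope.

Lemma count_pred1_andb (T : eqType) (x : T) (a : pred T) s :
  count (fun y => (y == x) && a y) s = a x * count_mem x s.
Proof.
elim: s => [|y s IHs] /=; first by rewrite muln0.
by rewrite IHs mulnDr; case: eqP => [-> | _]; rewrite ?muln0 ?muln1.
Qed.

Section ChordLabels.
Variable chs : seq (seq (nat * nat)).

(* [emit] labels the [l]-th chord of piece [k] by [chord_offset k + l]. *)
Definition chord_offset (k : nat) : nat := sumn (map size (take k chs)).

Lemma chord_offset_mono k1 k2 : k1 <= k2 -> chord_offset k1 <= chord_offset k2.
Proof. by move/subnKC <-; rewrite /chord_offset takeD map_cat sumn_cat leq_addr. Qed.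

Lemma chord_offset_size : chord_offset (size chs) = sumn (map size chs).
Proof. by rewrite /chord_offset take_size. Qed.

Lemma nth_nonnil_lt_size k l : l < size (nth [::] chs k) -> k < size chs.
Proof. by apply: contraTT; rewrite -!leqNgt => /(nth_default [::]) ->. Qed.

Lemma chord_offset_lt k l : l < size (nth [::] chs k) ->
  chord_offset k + l < chord_offset k.+1.
Proof.
move=> lt_l; rewrite /chord_offset (take_nth [::] (nth_nonnil_lt_size lt_l)).
by rewrite map_rcons sumn_rcons ltn_add2l.
Qed.

Lemma chord_offset_inj k l k' l' :
  l < size (nth [::] chs k) -> l' < size (nth [::] chs k') ->
  chord_offset k' + l' = chord_offset k + l -> k' = k.
Proof.
move=> lt_l lt_l' eq_lab; case: (ltngtP k' k) => // lt_k.
- by have := chord_offset_lt lt_l'; have := chord_offset_mono lt_k; lia.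
- by have := chord_offset_lt lt_l; have := chord_offset_mono lt_k; lia.
Qed.

Lemma chord_offset_decomp i : i < sumn (map size chs) ->
  exists k l, l < size (nth [::] chs k) /\ i = chord_offset k + l.
Proof.
rewrite /chord_offset; elim: chs i => [|w chs' IHchs] i //= lt_i.
have [lt_iw | le_wi] := ltnP i (size w); first by exists 0, i.
have [k [l [lt_l eq_i]]] : exists k l, l < size (nth [::] chs' k) /\
    i - size w = sumn (map size (take k chs')) + l by apply: IHchs; lia.
by exists k.+1, l; split=> //=; lia.
Qed.

Lemma count_mem_emit k l st : l < size (nth [::] chs k) ->
  count_mem (chord_offset k + l) (emit chs st) =
  (st.1.1 == k) && touches (nth (0, 0) (nth [::] chs k) l) st.1.2.
Proof.
move=> lt_l; case: st => [[k' s] up] /=.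
suff count_labels : count_mem (chord_offset k + l)
    [seq chord_offset k' + l0 | l0 <- iota 0 (size (nth [::] chs k'))
       & touches (nth (0, 0) (nth [::] chs k') l0) s] =
    (k' == k) && touches (nth (0, 0) (nth [::] chs k) l) s.
  by rewrite /emit; case: up; rewrite ?count_rev.
rewrite count_map count_filter; have [-> | neq_k] := eqVneq k' k.
  rewrite (@eq_count _ _ (fun l' => (l' == l) && touches (nth (0, 0) (nth [::] chs k) l') s));
    last by move=> l' /=; rewrite eqn_add2l.
  rewrite count_pred1_andb count_uniq_mem ?iota_uniq // mem_iota lt_l.
  by case: touches.
rewrite (@eq_in_count _ _ pred0) ?count_pred0 // => l'.
rewrite mem_iota add0n => lt_l'; apply/negbTE/andP => -[/eqP eq_lab _].
by move: neq_k; rewrite (chord_offset_inj lt_l lt_l' eq_lab) eqxx.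
Qed.

End ChordLabels.

Definition segments (T : seq (nat * nat * bool)) : seq (nat * nat) :=
  [seq (st.1.1, st.1.2) | st <- T].

Lemma size_counts m ps : size (counts m ps) = (size ps).+1.
Proof. by elim: ps m => //= pc ps IHps m; rewrite IHps. Qed.

(* The tour has [nsegs ps] states, visits no segment twice and only existing
   segments, of which there are [nsegs ps]: so it visits all of them. *)
Lemma mem_tour ps o k s : is_knot_diagram ps o -> k < size ps -> s < lev ps k ->
  (k, s) \in segments (tour ps o).
Proof.
case/and5P=> _ _ tour_uniq tour_within _ lt_k lt_s.
set allsegs := [seq (k0, s0) | k0 <- iota 0 (size ps), s0 <- iota 0 (lev ps k0)].
have sub_tour : {subset segments (tour ps o) <= allsegs}.
  move=> _ /mapP[[[k0 s0] b] /(allP tour_within)/andP[lt_k0 lt_s0] ->].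
  by apply/allpairsPdep; exists k0, s0; rewrite !mem_iota.
have le_size : size allsegs <= size (segments (tour ps o)).
  rewrite size_allpairs_dep size_map size_traject /nsegs.
  rewrite -(map_nth_iota0 0) ?size_counts //.
  by rewrite (eq_map (fun k0 => size_iota 0 (lev ps k0))).
have [_ ->] := uniq_min_size tour_uniq sub_tour le_size.
by apply/allpairsPdep; exists k, s; rewrite !mem_iota.
Qed.

Definition chord_word chs (T : seq (nat * nat * bool)) : seq nat := flatten (map (emit chs) T).

Lemma chord_word_lt chs T x : x \in chord_word chs T -> x < sumn (map size chs).
Proof.
case/flattenP=> _ /mapP[[[k s] b] _ ->].
suff lt_emit : x \in [seq chord_offset chs k + l | l <- iota 0 (size (nth [::] chs k))
                    & touches (nth (0, 0) (nth [::] chs k) l) s] -> x < sumn (map size chs).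
  by rewrite /emit; case: b; rewrite ?mem_rev.
case/mapP=> l; rewrite mem_filter mem_iota add0n => /andP[_ lt_l] ->.
apply: leq_trans (chord_offset_lt lt_l) _; rewrite -chord_offset_size.
exact/chord_offset_mono/(nth_nonnil_lt_size lt_l).
Qed.

Lemma size_sum_count_mem (s : seq nat) n : all (fun x => x < n) s ->
  size s = \sum_(i < n) count_mem (i : nat) s.
Proof.
elim: s => [|x s IHs] /=; first by rewrite big1.
case/andP=> lt_x /IHs ->; rewrite big_split /=.
suff -> : \sum_(i < n) (x == i : nat) = 1 by [].
rewrite (bigD1 (Ordinal lt_x)) //= eqxx big1 // => i.
by rewrite -val_eqE eq_sym => /negPf ->.
Qed.

Section KnotChords.
Variables (ps : seq piece) (o : bool) (chs : seq (seq (nat * nat))).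
Hypotheses (K_knot : is_knot_diagram ps o) (size_chs : size chs = size ps).
Hypothesis chs_within : forall k, all (chord_within (lev ps k)) (nth [::] chs k).

(* Both endpoints of a chord lie on existing segments of its piece, each visited once. *)
Lemma count_label_chord_word k l : l < size (nth [::] chs k) ->
  count_mem (chord_offset chs k + l) (chord_word chs (tour ps o)) = 2.
Proof.
move=> lt_l; have lt_k : k < size ps by rewrite -size_chs (nth_nonnil_lt_size lt_l).
set c := nth (0, 0) (nth [::] chs k) l.
have /and3P[c_neq c1_lt c2_lt] : chord_within (lev ps k) c by apply/(allP (chs_within k))/mem_nth.
rewrite /chord_word count_flatten -map_comp.
rewrite (eq_map (fun st => count_mem_emit st lt_l)) sumn_count.
rewrite (@eq_count _ _ (preim (fun st => (st.1.1, st.1.2)) (predU (pred1 (k, c.1)) (pred1 (k, c.2)))));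
  last by move=> [[k' s] b] /=; rewrite /touches !xpair_eqE; case: (k' == k); rewrite //= ![s == _]eq_sym.
rewrite -count_map -/(segments _).
have := count_predUI (pred1 (k, c.1)) (pred1 (k, c.2)) (segments (tour ps o)).
rewrite (@eq_count _ (predI _ _) pred0) ?count_pred0 ?addn0 => [->|]; last first.
  by move=> x /=; apply/negbTE/andP => -[/eqP -> /eqP [/eqP]]; rewrite (negbTE c_neq).
have [_ _ tour_uniq _ _] := and5P K_knot.
by rewrite !count_uniq_mem ?mem_tour.
Qed.

Lemma valid_chord_word n : sumn (map size chs) = n ->
  valid_cd (chord_word chs (tour ps o)) && (size (chord_word chs (tour ps o)) == 2 * n).
Proof.
move=> sum_chs; set W := chord_word chs (tour ps o).
have count_W i : i < n -> count_mem i W = 2.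
  rewrite -sum_chs => /chord_offset_decomp[k [l [lt_l ->]]].
  exact: count_label_chord_word.
have W_lt : all (fun x => x < n) W by apply/allP => x /chord_word_lt; rewrite sum_chs.
apply/andP; split; first by apply/allP => x /(allP W_lt) /count_W ->.
rewrite (size_sum_count_mem W_lt) (eq_bigr (fun _ => 2)) => [|i _]; last exact: count_W.
by rewrite sum_nat_const card_ord mulnC.
Qed.

End KnotChords.

Local Open Scope ring_scope.

Lemma in_chord_Z_integral n (X : fsum) :
  (forall y, y \in X -> [/\ y.1 = (numq y.1)%:~R, valid_cd y.2 & size y.2 == 2 * n]%N) ->
  in_chord_Z n X.
Proof.
move=> XP; exists [seq (numq y.1, y.2) | y <- X]; split.
  by rewrite all_map; apply/allP => y /XP[_ valid_y size_y] /=; rewrite valid_y size_y.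
exists [::]; split=> // w; rewrite /fcoef big_nil addr0 big_map.
by rewrite big_seq_cond [RHS]big_seq_cond; apply: eq_bigr => y /andP[/XP[] ].
Qed.

Theorem mainTheorem9 (Phi : ser bool) (ps : seq piece) (o : bool) :
  natural_associator Phi -> is_knot_diagram ps o -> in_chord_nat (I_Phi Phi ps o).
Proof.
move=> [_ Phi_natural] K_knot n; have [ps_wf _ _ _ _] := and5P K_knot.
apply: in_chord_Z_integral => _ /mapP[_ /mapP[x x_in ->] ->] /=.
have [size_x sum_x x_within xP] := mem_terms Phi_natural ps_wf x_in.
have /andP[valid_x size_x2] := valid_chord_word K_knot size_x x_within sum_x.
split=> //.
apply: int_of_pint_all => p p_prime; rewrite mulrA.
apply: pintM => //; first exact: Dn_pint (xP p p_prime).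
by apply: pintX => //; exact/pintN/(pint_nat _ 1).
Qed.
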